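(* Let $q\ge2$, $m\ge1$, $a$ a nonnegative integer and $R\in[m]$. Then $$\max_{{\boldsymbol y}\in\Sigma_{q,R}^m}\sum_{i=1}^{R}(r_i+a)\log_2(r_i+a)=(m-R+1+a)\log_2(m-R+1+a)+(R-1)(a+1)\log_2(a+1),$$ where $(r_1,\dots,r_R)$ denotes the run length profile of ${\boldsymbol y}$.
   Context: $\Sigma_q=\{0,\dots,q-1\}$. A run is a maximal block of identical consecutive symbols; the run length profile of ${\boldsymbol y}$ is the vector of its run lengths from left to right. $\Sigma_{q,R}^m$ is the set of sequences in $\Sigma_q^m$ with exactly $R$ runs. *)

From mathcomp Require Import all_boot all_order all_algebra.
From mathcomp Require Import all_classical all_reals all_analysis.
Set Implicit Arguments. Unset Strict Implicit. Unset Printing Implicit Defensive.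
Import Order.TTheory GRing.Theory Num.Theory.
Local Open Scope ring_scope.

Fixpoint rlp_aux (T : eqType) (x : T) (n : nat) (s : seq T) : seq nat :=
  match s with
  | [::] => [:: n]
  | y :: s' => if y == x then rlp_aux x n.+1 s' else n :: rlp_aux y 1 s'
  end.

Definition run_profile (T : eqType) (s : seq T) : seq nat :=
  match s with
  | [::] => [::]
  | x :: s' => rlp_aux x 1 s'
  end.

Definition nruns (T : eqType) (s : seq T) : nat := size (run_profile s).

Definition log2 {R : realType} (x : R) : R := ln x / ln 2.

From mathcomp Require Import all_boot all_order all_algebra.
From mathcomp Require Import all_classical all_reals all_analysis.
From mathcomp Require Import lra ring zify.
Set Implicit Arguments. Unset Strict Implicit. Unset Printing Implicit Defensive.
Import Order.TTheory GRing.Theory Num.Theory.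
Local Open Scope ring_scope.

(* The function g z = z log2 z is convex, so g p + g q <= g (p + q - c) + g c
   whenever p, q >= c > 0: the pair on the right has the same sum and is more
   spread out.  Applied with c = a + 1 to shifted run lengths r + a, it lets one
   run absorb all but one symbol of another without decreasing the sum; hence
   R positive run lengths adding up to m are dominated by (m - R + 1, 1, ..., 1),
   the profile of a constant block followed by R - 1 alternating symbols. *)

Section RunProfile.

Variable T : eqType.

Lemma rlp_aux_gt0 (x : T) n s : (0 < n)%N -> all (fun r => 0 < r)%N (rlp_aux x n s).
Proof.
elim: s x n => [|y s IHs] x n n_gt0 /=; first by rewrite n_gt0.
by case: ifP => _ /=; rewrite ?n_gt0 IHs.
Qed.

Lemma sumn_rlp_aux (x : T) n s : sumn (rlp_aux x n s) = (n + size s)%N.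
Proof.
elim: s x n => [|y s IHs] x n /=; first by rewrite !addn0.
by case: ifP => _ /=; rewrite IHs; lia.
Qed.

Lemma rlp_aux_nseq (x : T) n t s : rlp_aux x n (nseq t x ++ s) = rlp_aux x (n + t) s.
Proof. by elim: t n => [|t IHt] n /=; rewrite ?addn0 // eqxx IHt addnS. Qed.

Fixpoint alternate (x y : T) (j : nat) : seq T :=
  if j is j'.+1 then x :: alternate y x j' else [::].

Lemma size_alternate x y j : size (alternate x y j) = j.
Proof. by elim: j x y => //= j IHj x y; rewrite IHj. Qed.

Lemma rlp_aux_alternate (z x y : T) n j : z != x -> x != y ->
  rlp_aux z n (alternate x y j) = n :: nseq j 1%N.
Proof.
elim: j z x y n => //= j IHj z x y n zx xy.
by rewrite eq_sym (negbTE zx) IHj // eq_sym.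
Qed.

Lemma run_profile_gt0 (s : seq T) : all (fun r => 0 < r)%N (run_profile s).
Proof. by case: s => //= x s; apply: rlp_aux_gt0. Qed.

Lemma sumn_run_profile (s : seq T) : sumn (run_profile s) = size s.
Proof. by case: s => //= x s; rewrite sumn_rlp_aux. Qed.

Lemma run_profile_block_alternate (x y : T) n j : x != y ->
  run_profile (nseq n.+1 x ++ alternate y x j) = n.+1 :: nseq j 1%N.
Proof.
by move=> xy; rewrite /= rlp_aux_nseq rlp_aux_alternate // eq_sym.
Qed.

End RunProfile.

Lemma size_le_sumn (s : seq nat) : all (fun r => 0 < r)%N s -> (size s <= sumn s)%N.
Proof. by elim: s => //= r s IHs /andP[r_gt0 /IHs]; lia. Qed.

Lemma sum_le_concentrated (R : numDomainType) (phi : nat -> R) :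
  (forall x y, (0 < x)%N -> (0 < y)%N -> phi x + phi y <= phi (x + y).-1 + phi 1%N) ->
  forall r t, all (fun x => 0 < x)%N (r :: t) ->
  \sum_(x <- r :: t) phi x <= phi (sumn (r :: t) - size t)%N + (size t)%:R * phi 1%N.
Proof.
move=> phi_exchange r t; elim: t r => [|r' t IHt] r /=.
  by rewrite big_seq1 addn0 subn0 mul0r addr0.
case/andP=> r_gt0 pos_t; have /= t_le_sumn := @size_le_sumn (r' :: t) pos_t.
rewrite big_cons; apply: le_trans (lerD (lexx _) (IHt _ pos_t)) _.
rewrite addrA -natr1 mulrDl mul1r addrA -[leRHS]addrA (addrC _ (phi 1%N)) addrA lerD2r.
have -> : (r + (r' + sumn t) - (size t).+1 = (r + (sumn (r' :: t) - size t)).-1)%N.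
  by rewrite /=; lia.
by apply: phi_exchange => //=; lia.
Qed.

Lemma sum_run_profile_le (R : numDomainType) (T : eqType) (phi : nat -> R) (s : seq T) :
  (forall x y, (0 < x)%N -> (0 < y)%N -> phi x + phi y <= phi (x + y).-1 + phi 1%N) ->
  (0 < nruns s)%N ->
  \sum_(r <- run_profile s) phi r <= phi (size s - nruns s).+1 + (nruns s).-1%:R * phi 1%N.
Proof.
move=> phi_exchange; rewrite /nruns -(sumn_run_profile s).
have := run_profile_gt0 s; case: (run_profile s) => [|r t] // pos_s _.
have /= size_le := size_le_sumn pos_s.
have -> : (sumn (r :: t) - size (r :: t)).+1 = (sumn (r :: t) - size t)%N.
  by rewrite /=; lia.
exact: sum_le_concentrated.
Qed.

Lemma exists_tuple_run_profile q m k : (2 <= q)%N -> (0 < k <= m)%N ->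
  exists y : m.-tuple 'I_q, run_profile (tval y) = (m - k).+1 :: nseq k.-1 1%N.
Proof.
case: q => [|[|q]] // _ /andP[k_gt0 k_le_m].
pose s : seq 'I_q.+2 := nseq (m - k).+1 ord0 ++ alternate ord_max ord0 k.-1.
have size_s : size s == m by rewrite size_cat size_nseq size_alternate; apply/eqP; lia.
by exists (Tuple size_s); rewrite run_profile_block_alternate // -val_eqE.
Qed.

Section TangentExchange.

Variables (R : realFieldType) (g D : R -> R).
Hypothesis g_tangent : forall {x y}, 0 < x -> 0 < y -> g x + D x * (y - x) <= g y.

Lemma tangent_chord {c p s} : 0 < c -> c <= p <= s ->
  (s - c) * g p <= (s - p) * g c + (p - c) * g s.
Proof.
move=> c_gt0 /andP[cp ps].
have p_gt0 := lt_le_trans c_gt0 cp; have s_gt0 := lt_le_trans p_gt0 ps.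
have sp_ge0 : 0 <= s - p by rewrite subr_ge0.
have pc_ge0 : 0 <= p - c by rewrite subr_ge0.
have -> : (s - c) * g p =
    (s - p) * (g p + D p * (c - p)) + (p - c) * (g p + D p * (s - p)) by ring.
exact: lerD (ler_wpM2l sp_ge0 (g_tangent p_gt0 c_gt0))
            (ler_wpM2l pc_ge0 (g_tangent p_gt0 s_gt0)).
Qed.

Lemma tangent_exchange c p q : 0 < c -> c <= p -> c <= q ->
  g p + g q <= g (p + q - c) + g c.
Proof.
move=> c_gt0 cp cq; set s := p + q - c.
have cps : c <= p <= s by apply/andP; split; rewrite /s; lra.
have cqs : c <= q <= s by apply/andP; split; rewrite /s; lra.
have := lerD (tangent_chord c_gt0 cps) (tangent_chord c_gt0 cqs).
have -> : (s - p) * g c + (p - c) * g s + ((s - q) * g c + (q - c) * g s)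
          = (s - c) * (g s + g c) by rewrite /s; ring.
rewrite -mulrDr; have [spread_gt0 | spread_le0] := ltP 0 (s - c).
  by rewrite ler_pM2l.
have [pc qc] : p = c /\ q = c by split; rewrite /s in spread_le0; lra.
by rewrite /s pc qc addrK.
Qed.

End TangentExchange.

Definition xlog2 {R : realType} (z : R) : R := z * log2 z.

Lemma xlnx_tangent (R : realType) (x y : R) : 0 < x -> 0 < y ->
  x * ln x + (1 + ln x) * (y - x) <= y * ln y.
Proof.
move=> x_gt0 y_gt0; have xy_gt0 : 0 < x / y by rewrite divr_gt0.
have ln_le : ln (x / y) <= x / y - 1.
  by rewrite -[X in ln X](subrKC 1) le_ln1Dx //; lra.
have := ler_wpM2l (ltW y_gt0) ln_le.
rewrite ln_div ?posrE // (_ : y * (x / y - 1) = x - y); first by nra.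
by field; rewrite gt_eqF.
Qed.

Lemma xlog2_tangent (R : realType) (x y : R) : 0 < x -> 0 < y ->
  xlog2 x + (1 + ln x) / ln 2 * (y - x) <= xlog2 y.
Proof.
move=> x_gt0 y_gt0; have ln2_gt0 : 0 < ln (2 : R) by rewrite ln_gt0 // ltr1n.
have -> : xlog2 x + (1 + ln x) / ln 2 * (y - x)
          = (x * ln x + (1 + ln x) * (y - x)) / ln 2 by rewrite /xlog2 /log2; ring.
by rewrite /xlog2 /log2 mulrA ler_pM2r ?invr_gt0 // xlnx_tangent.
Qed.

Lemma xlog2_shift_exchange (R : realType) (a x y : nat) : (0 < x)%N -> (0 < y)%N ->
  xlog2 ((x + a)%:R : R) + xlog2 (y + a)%:R <=
  xlog2 ((x + y).-1 + a)%:R + xlog2 (1 + a)%:R.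
Proof.
move=> x_gt0 y_gt0.
have -> : ((x + y).-1 + a)%:R = (x + a)%:R + (y + a)%:R - (1 + a)%:R :> R.
  by apply/eqP; rewrite eq_sym subr_eq -!natrD eqr_nat; apply/eqP; lia.
apply: (@tangent_exchange R xlog2 (fun x => (1 + ln x) / ln 2) (@xlog2_tangent R)).
all: by rewrite ?ltr0n ?ler_nat; lia.
Qed.

Theorem lemma6 (R : realType) (q m a k : nat) :
  (2 <= q)%N -> (1 <= m)%N -> (1 <= k <= m)%N ->
  let F := fun y : m.-tuple 'I_q =>
    \sum_(r <- run_profile (tval y)) ((r + a)%:R * log2 ((r + a)%:R : R)) in
  let V := ((m - k + 1 + a)%:R * log2 ((m - k + 1 + a)%:R : R)
            + (k - 1)%:R * ((a + 1)%:R * log2 ((a + 1)%:R : R))) in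
  (exists y : m.-tuple 'I_q, nruns (tval y) = k /\ F y = V) /\
  (forall y : m.-tuple 'I_q, nruns (tval y) = k -> F y <= V).
Proof.
move=> q_ge2 _ k_range F V; pose phi r := xlog2 ((r + a)%:R : R).
have V_phi : V = phi (m - k).+1 + k.-1%:R * phi 1%N.
  by rewrite /V /phi addn1 subn1 (addnC a 1).
split.
  have [y profile_y] := exists_tuple_run_profile q_ge2 k_range.
  exists y; rewrite /nruns /F V_phi profile_y /= size_nseq; split; first lia.
  by rewrite big_cons big_nseq iter_addr addr0 [k.-1%:R * _]mulr_natl.
move=> y k_runs; have k_gt0 : (0 < k)%N by case/andP: k_range.
have := @sum_run_profile_le _ _ phi (tval y) (xlog2_shift_exchange R a).
by rewrite /F V_phi size_tuple k_runs; apply.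
Qed.
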